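(* Let $\mathbb F$ be a finite field and let $n,k,r$ be integers with $2\le r<k$. If $\mathcal C$ is an $(n,k,r,3)$-sequential locally repairable code (SLRC) over $\mathbb F$, then $$\frac{k}{n}\le\left(\frac{r}{r+1}\right)^2 .$$
   Context: Let $\mathcal C$ be an $[n,k]$ linear code over a finite field $\mathbb F$, with coordinates indexed by $[n]=\{1,\dots,n\}$. For $i\in[n]$, a set $R\subseteq[n]\setminus\{i\}$ is a recovering set of $i$ if there are nonzero $a_j\in\mathbb F$ ($j\in R$) with $x_i=\sum_{j\in R}a_jx_j$ for every codeword $x=(x_1,\dots,x_n)\in\mathcal C$. For $E\subseteq[n]$, $\mathcal C$ is $(E,r)$-recoverable if $E$ can be indexed as $E=\{i_1,\dots,i_{|E|}\}$ so that each $i_\ell$ has a recovering set $R_\ell\subseteq([n]\setminus E)\cup\{i_1,\dots,i_{\ell-1}\}$ with $|R_\ell|\le r$. $\mathcal C$ is an $(n,k,r,t)$-SLRC if it is $(E,r)$-recoverable for every $E\subseteq[n]$ with $|E|\le t$. *)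

From HB Require Import structures.
From mathcomp Require Import all_boot all_order all_algebra all_field.
Set Implicit Arguments. Unset Strict Implicit. Unset Printing Implicit Defensive.
Import GRing.Theory Num.Theory.
Local Open Scope ring_scope.

(* A linear code of length n over F is a subspace C of the row space 'rV[F]_n;
   it is an [n,k] code when \dim C = k.  Coordinates are indexed by 'I_n. *)

Definition recovering_set (F : fieldType) (n : nat) (C : {vspace 'rV[F]_n})
    (i : 'I_n) (R : {set 'I_n}) : Prop :=
  i \notin R /\
  exists a : 'I_n -> F, (forall j, j \in R -> a j != 0) /\
    forall x : 'rV[F]_n, x \in C -> x 0 i = \sum_(j in R) a j * x 0 j.

Definition recoverable (F : fieldType) (n : nat) (C : {vspace 'rV[F]_n})
    (E : {set 'I_n}) (r : nat) : Prop :=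
  exists s : seq 'I_n, uniq s /\ [set x in s] = E /\
    forall (s1 s2 : seq 'I_n) (i : 'I_n), s = s1 ++ i :: s2 ->
      exists R : {set 'I_n},
        recovering_set C i R /\
        R \subset (~: E) :|: [set x in s1] /\ (#|R| <= r)%N.

(* C is an (n,k,r,t)-SLRC (with \dim C = k stated separately). *)
Definition SLRC (F : fieldType) (n : nat) (C : {vspace 'rV[F]_n}) (r t : nat) : Prop :=
  forall E : {set 'I_n}, (#|E| <= t)%N -> recoverable C E r.

(* Let M be a row-free matrix whose rows are dual codewords of weight at most
   r + 1 spanning all such codewords; as its rows are orthogonal to C,
   k + m <= n for the number m of rows of M.  Repairing one, two or three
   erasures in turn shows that, in the support pattern of M, every column is
   covered, no row contains two private columns (columns covered by a single
   row), and no column covered by exactly two rows has private columns in both.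
   Discharging then gives (2r + 1) n <= (r + 1)^2 m: a private column weighs
   2r + 1, the other columns of a row containing a private column weigh r, and
   all remaining incidences weigh r + 1, so every row carries at most
   (r + 1)^2 while every column receives at least 2r + 1.  Eliminating m yields
   k (r + 1)^2 <= r^2 n. *)

From HB Require Import structures.
From mathcomp Require Import all_boot all_order all_algebra all_field.
From mathcomp Require Import zify.
Set Implicit Arguments. Unset Strict Implicit. Unset Printing Implicit Defensive.
Import GRing.Theory Num.Theory.
Local Open Scope ring_scope.

Section Discharging.
Local Open Scope nat_scope.
Variables (I J : finType) (r : nat) (inc : I -> J -> bool).

Definition col_supp (c : J) := [set i | inc i c].
Definition private_col (c : J) := #|col_supp c| == 1.
Definition has_private (i : I) := [exists c, inc i c && private_col c].

Definition discharge_weight (i : I) (c : J) :=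
  if private_col c then (2 * r).+1 else if has_private i then r else r.+1.

Hypotheses (r_gt0 : 0 < r)
  (row_supp_small : forall i, #|[set c | inc i c]| <= r.+1)
  (col_supp_neq0 : forall c, col_supp c != set0)
  (private_col_uniq : forall i c c', col_supp c = [set i] -> col_supp c' = [set i] -> c = c')
  (private_col_pair : forall c i1 i2 c1 c2, i1 != i2 -> col_supp c = [set i1; i2] ->
      col_supp c1 = [set i1] -> col_supp c2 = [set i2] -> False).

Lemma private_col_supp i c : inc i c -> private_col c -> col_supp c = [set i].
Proof.
move=> ic /cards1P[j Tc]; rewrite Tc.
have : i \in col_supp c by rewrite inE.
by rewrite Tc inE => /eqP ->.
Qed.

Lemma row_weight_le i : \sum_(c | inc i c) discharge_weight i c <= r.+1 ^ 2.
Proof.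
have row_card := row_supp_small i.
case: (boolP (has_private i)) => [/existsP[c0 /andP[ic0 pc0]] | no_private].
  have others_card : #|[set c | inc i c && (c != c0)]|.+1 = #|[set c | inc i c]|.
    rewrite (cardsD1 c0 [set c | inc i c]) inE ic0 add1n; congr _.+1.
    by apply: eq_card => c; rewrite !inE andbC.
  rewrite (bigD1 c0) //= {1}/discharge_weight pc0.
  have others : \sum_(c | inc i c && (c != c0)) discharge_weight i c
                <= \sum_(c | inc i c && (c != c0)) r.
    have hpi : has_private i by apply/existsP; exists c0; rewrite ic0.
    apply: leq_sum => c /andP[ic cc0]; rewrite /discharge_weight hpi.
    case: ifP => // pc.
    case/eqP: cc0.
    exact: private_col_uniq (private_col_supp ic pc) (private_col_supp ic0 pc0).
  rewrite (sum_nat_cond_const (fun c => inc i c && (c != c0))) in others; nia.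
rewrite (eq_bigr (fun=> r.+1)) => [|c ic]; first by rewrite sum_nat_cond_const; nia.
rewrite /discharge_weight (negbTE no_private); case: ifP => // pc.
by case/existsP: no_private; exists c; rewrite ic pc.
Qed.

Lemma col_weight_ge c : (2 * r).+1 <= \sum_(i | inc i c) discharge_weight i c.
Proof.
case: (boolP (private_col c)) => [pc | npc].
  have [i Tc] := cards1P pc.
  rewrite (eq_bigl (fun j => j \in [set i])) ?big_set1 => [|j]; last by rewrite -Tc inE.
  by rewrite /discharge_weight pc.
have ge_r i : r <= discharge_weight i c by rewrite /discharge_weight (negbTE npc); case: ifP.
have := col_supp_neq0 c; rewrite -card_gt0 => Tc_gt0.
case: (ltnP 2 #|col_supp c|) => [Tc_gt2 | Tc_le2].
  apply: (@leq_trans (\sum_(i | inc i c) r)); last exact: leq_sum.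
  by rewrite sum_nat_cond_const -/(col_supp c); nia.
have /cards2P[i1 [i2 [i12 Tc]]] : #|col_supp c| == 2 by move: npc; rewrite /private_col; lia.
rewrite (eq_bigl (fun j => j \in [set i1; i2])) => [|j]; last by rewrite -Tc inE.
rewrite big_setU1 ?inE //= big_set1 /discharge_weight (negbTE npc).
case hp1 : (has_private i1); case hp2 : (has_private i2); try lia.
move: hp1 hp2 => /existsP[c1 /andP[i1c1 pc1]] /existsP[c2 /andP[i2c2 pc2]].
by case: (private_col_pair i12 Tc (private_col_supp i1c1 pc1) (private_col_supp i2c2 pc2)).
Qed.

Lemma discharging_bound : (2 * r).+1 * #|J| <= r.+1 ^ 2 * #|I|.
Proof.
rewrite [X in X <= _]mulnC [X in _ <= X]mulnC -!sum_nat_const.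
apply: (@leq_trans (\sum_c \sum_(i | inc i c) discharge_weight i c)).
  by apply: leq_sum => c _; apply: col_weight_ge.
rewrite (exchange_big_dep predT) //=.
by apply: leq_sum => i _; exact: row_weight_le.
Qed.
End Discharging.

Lemma free_row_free (F : fieldType) n p (X : p.-tuple 'rV[F]_n) :
  free X -> row_free (\matrix_(i < p) X`_i).
Proof.
move=> /freeP freeX; apply: inj_row_free => u; rewrite mulmx_sum_row => u0.
apply/rowP => i; rewrite mxE; apply: (freeX (fun i => u 0 i)).
by rewrite -[RHS]u0; apply: eq_bigr => j _; rewrite rowK.
Qed.

Lemma dimv_add_rank_le (F : fieldType) n m (C : {vspace 'rV[F]_n}) (M : 'M[F]_(m, n)) :
  (forall x, x \in C -> x *m M^T = 0) -> (\dim C + \rank M <= n)%N.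
Proof.
move=> CM; pose B := \matrix_(i < \dim C) (vbasis C)`_i.
have freeB : row_free B by apply/free_row_free/basis_free/vbasisP.
have BM : (B <= kermx M^T)%MS.
  apply/sub_kermxP/row_matrixP => i; rewrite row_mul rowK row0 CM //.
  by rewrite vbasis_mem // mem_nth ?size_tuple.
have := mxrankS BM; rewrite mxrank_ker mxrank_tr (eqP freeB).
by have := rank_leq_col M; lia.
Qed.

Lemma exists_row_basis_in (F : finFieldType) n (P : pred 'rV[F]_n) :
  exists m (M : 'M[F]_(m, n)),
    [/\ row_free M, forall i, P (row i M) & forall h, P h -> (h <= M)%MS].
Proof.
pose A := \matrix_(i < #|P|) enum_val i.
exists (\rank A), (rowsub (maxrankfun A) A); split.
- exact: maxrowsub_free.
- by move=> i; rewrite row_rowsub rowK; exact: enum_valP.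
- move=> h Ph; rewrite eq_maxrowsub -(enum_rankK_in Ph Ph) -rowK.
  exact: row_sub.
Qed.

Section Isolation.
Variables (F : fieldType) (m n : nat) (M : 'M[F]_(m, n)).

Definition mx_nz (i : 'I_m) (c : 'I_n) := M i c != 0.

Definition isolates (E : {set 'I_n}) := exists2 x, x \in E &
  exists2 u : 'rV[F]_m, (u *m M) 0 x != 0 & {in E :\ x, forall y, (u *m M) 0 y = 0}.

Lemma mulmx_col_supp (u : 'rV[F]_m) c :
  (u *m M) 0 c = \sum_(i in col_supp mx_nz c) u 0 i * M i c.
Proof.
rewrite mxE [RHS]big_mkcond; apply: eq_bigr => i _; rewrite inE /mx_nz.
by case: eqP => [->|]; rewrite ?mulr0.
Qed.

Lemma mulmx_private_eq0 (u : 'rV[F]_m) c i : col_supp mx_nz c = [set i] ->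
  ((u *m M) 0 c == 0) = (u 0 i == 0).
Proof.
move=> Tc; have : i \in col_supp mx_nz c by rewrite Tc set11.
by rewrite inE /mx_nz => Mic; rewrite mulmx_col_supp Tc big_set1 mulf_eq0 (negbTE Mic) orbF.
Qed.

Hypothesis isolates3 : forall E, E != set0 -> (#|E| <= 3)%N -> isolates E.

Lemma isolates_col_supp_neq0 c : col_supp mx_nz c != set0.
Proof.
have [||x /set1P -> [u uc _]] := @isolates3 [set c].
- by apply/set0Pn; exists c; rewrite set11.
- by rewrite cards1.
by apply: contraNneq uc => Tc; rewrite mulmx_col_supp Tc big_set0.
Qed.

Lemma isolates_private_uniq i c c' :
  col_supp mx_nz c = [set i] -> col_supp mx_nz c' = [set i] -> c = c'.
Proof.
move=> Tc Tc'; apply/eqP/contraT => cc'.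
have [||x xE [u ux u0]] := @isolates3 [set c; c'].
- by apply/set0Pn; exists c; rewrite set21.
- by rewrite cards2; case: (c != c').
have eq0_iff y : y \in [set c; c'] -> ((u *m M) 0 y == 0) = (u 0 i == 0).
  by case/set2P => ->; apply: mulmx_private_eq0.
have [y yEx] : exists y, y \in [set c; c'] :\ x.
  by case/set2P: xE => ->; [exists c' | exists c]; rewrite !inE eqxx ?orbT ?andbT // eq_sym.
have /setD1P[_ yE] := yEx.
by move: ux; rewrite eq0_iff // -(eq0_iff y yE) u0 // eqxx.
Qed.

Lemma isolates_private_pair c i1 i2 c1 c2 : i1 != i2 -> col_supp mx_nz c = [set i1; i2] ->
  col_supp mx_nz c1 = [set i1] -> col_supp mx_nz c2 = [set i2] -> False.
Proof.
move=> i12 Tc Tc1 Tc2.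
have M1c : M i1 c != 0 by have := set21 i1 i2; rewrite -Tc inE.
have M2c : M i2 c != 0 by have := set22 i1 i2; rewrite -Tc inE.
have c12 : c1 != c2 by apply: contra_neq i12 => e; apply/set1_inj; rewrite -Tc1 -Tc2 e.
have not_private j : col_supp mx_nz c != [set j].
  by apply/eqP => Tcj; have := cards2 i1 i2; rewrite i12 -Tc Tcj cards1.
have cc1 : c != c1 by apply/eqP => e; move: (not_private i1); rewrite e Tc1 eqxx.
have cc2 : c != c2 by apply/eqP => e; move: (not_private i2); rewrite e Tc2 eqxx.
have [||x xE [u ux u0]] := @isolates3 [set c1; c2; c].
- by apply/set0Pn; exists c; rewrite !inE eqxx orbT.
- by rewrite !cardsU !cards1; lia.
have {}u0 y : y \in [set c1; c2; c] -> y != x -> (u *m M) 0 y = 0.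
  by move=> yE yx; apply: u0; rewrite in_setD1 yx.
have v1 := mulmx_private_eq0 u Tc1; have v2 := mulmx_private_eq0 u Tc2.
have vc : (u *m M) 0 c = u 0 i1 * M i1 c + u 0 i2 * M i2 c.
  by rewrite mulmx_col_supp Tc big_setU1 ?big_set1 ?inE.
have E1 : c1 \in [set c1; c2; c] by rewrite !inE eqxx.
have E2 : c2 \in [set c1; c2; c] by rewrite !inE eqxx orbT.
have E3 : c \in [set c1; c2; c] by rewrite !inE eqxx !orbT.
move: xE ux u0; rewrite !inE -orbA => /or3P[]/eqP-> ux u0.
- have /eqP u2 : u 0 i2 == 0 by rewrite -v2 u0 // eq_sym.
  move: ux; rewrite v1 => /negbTE u1; have /eqP := u0 c E3 cc1.
  by rewrite vc u2 mul0r addr0 mulf_eq0 u1 (negbTE M1c).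
- have /eqP u1 : u 0 i1 == 0 by rewrite -v1 u0.
  move: ux; rewrite v2 => /negbTE u2; have /eqP := u0 c E3 cc2.
  by rewrite vc u1 mul0r add0r mulf_eq0 u2 (negbTE M2c).
- have /eqP u1 : u 0 i1 == 0 by rewrite -v1 u0 // eq_sym.
  have /eqP u2 : u 0 i2 == 0 by rewrite -v2 u0 // eq_sym.
  by move: ux; rewrite vc u1 u2 !mul0r addr0 eqxx.
Qed.

End Isolation.

Section DualCodewords.
Variables (F : finFieldType) (n : nat) (C : {vspace 'rV[F]_n}).

Definition dual_codeword (h : 'rV[F]_n) := [forall x, (x \in C) ==> (x *m h^T == 0)].
Definition supp (h : 'rV[F]_n) := [set c | h 0 c != 0].
Definition local_dual (r : nat) (h : 'rV[F]_n) := dual_codeword h && (#|supp h| <= r.+1)%N.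

Lemma dual_codewordP h : reflect (forall x, x \in C -> x *m h^T = 0) (dual_codeword h).
Proof.
apply: (iffP forallP) => [dh x xC | dh x]; first by apply/eqP; rewrite (implyP (dh x)).
by apply/implyP => /dh ->.
Qed.

Lemma mulmx_tr_dual_rows m (M : 'M[F]_(m, n)) x :
  (forall i, dual_codeword (row i M)) -> x \in C -> x *m M^T = 0.
Proof.
move=> dM xC; apply/rowP => i; move/dual_codewordP/(_ x xC)/rowP/(_ 0): (dM i).
by rewrite !mxE => dx; rewrite -[RHS]dx; apply: eq_bigr => c _; rewrite !mxE.
Qed.

Lemma recovering_set_dual i R : recovering_set C i R ->
  exists h, [/\ dual_codeword h, h 0 i != 0 & supp h \subset i |: R].
Proof.
move=> [iR [a [_ recover]]].
exists (\row_c ((c == i)%:R - (c \in R)%:R * a c)); split.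
- apply/dual_codewordP => x xC; apply/rowP => z; rewrite !mxE.
  under eq_bigr do rewrite !mxE mulrBr.
  rewrite sumrB (bigD1 i) //= eqxx mulr1 big1 => [|c /negbTE ->]; last by rewrite mulr0.
  rewrite addr0 recover // big_mkcond /=; apply/eqP; rewrite subr_eq0; apply/eqP.
  apply: eq_bigr => c _.
  by case: (c \in R); rewrite ?mul1r ?mul0r ?mulr0 // mulrC.
- by rewrite mxE eqxx (negbTE iR) mul0r subr0 oner_neq0.
- apply/subsetP => c; rewrite !inE mxE.
  by case: (c == i); case: (c \in R); rewrite //= mul0r subrr eqxx.
Qed.

Lemma SLRC_local_repair r t E : SLRC C r t -> E != set0 -> (#|E| <= t)%N ->
  exists2 x, x \in E & exists h,
    [/\ local_dual r h, h 0 x != 0 & {in E :\ x, forall y, h 0 y = 0}].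
Proof.
move=> slrc /set0Pn[e eE] Et; have [[|x s] [_ [sE order]]] := slrc E Et.
  by move: eE; rewrite -sE inE.
have [R [recR [RE Rr]]] := order [::] s x erefl.
have [h [dh hx hR]] := recovering_set_dual recR.
exists x; first by rewrite -sE inE mem_head.
exists h; split=> //.
- rewrite /local_dual dh (leq_trans (subset_leq_card hR)) //.
  by rewrite cardsU1 -add1n leq_add ?leq_b1.
- move=> y; rewrite !inE => /andP[yx yE].
  have : y \notin supp h.
    apply: contraL yE => /(subsetP hR); rewrite !inE (negbTE yx) /= => /(subsetP RE).
    by rewrite !inE orbF.
  by rewrite inE negbK => /eqP.
Qed.

Lemma supp_row m (M : 'M[F]_(m, n)) i : supp (row i M) = [set c | mx_nz M i c].
Proof. by apply/setP => c; rewrite !inE mxE. Qed.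

Lemma SLRC_isolates r t m (M : 'M[F]_(m, n)) E :
  SLRC C r t -> (forall h, local_dual r h -> (h <= M)%MS) ->
  E != set0 -> (#|E| <= t)%N -> isolates M E.
Proof.
move=> slrc spanM E0 Et.
have [x xE [h [/spanM/submxP[u ->] hx h0]]] := SLRC_local_repair slrc E0 Et.
by exists x => //; exists u.
Qed.

End DualCodewords.

Lemma ler_div_sqr_nat (R : numFieldType) n k r : (0 < n)%N ->
  (k * r.+1 ^ 2 <= r ^ 2 * n)%N -> (k%:R / n%:R : R) <= (r%:R / r.+1%:R) ^+ 2.
Proof.
move=> n_gt0 count; rewrite expr_div_n -!natrX ler_pdivrMr ?ltr0n //.
by rewrite mulrAC ler_pdivlMr ?ltr0n ?expn_gt0 // -!natrM ler_nat.
Qed.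

Theorem theorem1 (F : finFieldType) (n k r : nat) (C : {vspace 'rV[F]_n}) :
  (2 <= r)%N -> (r < k)%N -> \dim C = k -> SLRC C r 3 ->
  (k%:R / n%:R : rat) <= (r%:R / (r.+1)%:R) ^+ 2.
Proof.
move=> r_ge2 r_lt_k dimC slrc.
have [m [M [freeM localM spanM]]] := exists_row_basis_in (local_dual C r).
have dim_le : (k + m <= n)%N.
  rewrite -dimC -(eqP freeM); apply: dimv_add_rank_le => x.
  by apply: mulmx_tr_dual_rows => i; have /andP[] := localM i.
have isoM E : E != set0 -> (#|E| <= 3)%N -> isolates M E := SLRC_isolates slrc spanM.
have count : ((2 * r).+1 * n <= r.+1 ^ 2 * m)%N.
  rewrite -[n in X in (X <= _)%N]card_ord -[m in X in (_ <= X)%N]card_ord.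
  apply: (@discharging_bound _ _ r (mx_nz M) (ltnW r_ge2)) => [i | | | ].
  - by rewrite -supp_row; have /andP[] := localM i.
  - exact: isolates_col_supp_neq0.
  - exact: isolates_private_uniq.
  - exact: isolates_private_pair.
apply: ler_div_sqr_nat; nia.
Qed.
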